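(* Suppose there is $x_0\in\mathbb{R}$ such that $k^2$ is continuous, nonincreasing on $(-\infty,x_0]$ and nondecreasing on $[x_0,\infty)$, with minimum value $k^2_{\min}=k^2(x_0)$ (which may be negative). Let $\Delta>0$ satisfy $k^2_{\min}\le\Delta^2\le\min\{k_{+\infty}^2,k_{-\infty}^2\}$. Then $$T\ \ge\ \mathrm{sech}^2\left\{\frac12\ln\frac{k_{+\infty}k_{-\infty}}{\Delta^2}+\frac{1}{2\Delta}\int_{\{x:\,k^2(x)<\Delta^2\}}\big(\Delta^2-k^2\big)\,\mathrm{d}x\right\}.$$
   Context: Standing setup: $k^2:\mathbb{R}\to\mathbb{R}$ is a piecewise continuous function (it may be negative somewhere) with $k^2(x)\to k_{\pm\infty}^2$ as $x\to\pm\infty$, where $k_{\pm\infty}>0$ and $k^2-k_{\pm\infty}^2$ is integrable near $\pm\infty$. For the equation $u''+k^2(x)u=0$ there is a solution with $u(x)=e^{ik_{-\infty}x}+r\,e^{-ik_{-\infty}x}+o(1)$ as $x\to-\infty$ and $u(x)=\tau\,e^{ik_{+\infty}x}+o(1)$ as $x\to+\infty$; the transmission probability is $T=(k_{+\infty}/k_{-\infty})|\tau|^2$. Here $\mathrm{sech}=1/\cosh$. *)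

From Stdlib Require Import Reals Lra.
Open Scope R_scope.

Definition sech (x : R) : R := / cosh x.

Definition is_integral (f : R -> R) (a b v : R) : Prop :=
  exists pr : Riemann_integrable f a b, RiemannInt pr = v.

Definition tends_pinf (f : R -> R) (l : R) : Prop :=
  forall eps, 0 < eps -> exists M, forall x, M <= x -> Rabs (f x - l) < eps.
Definition tends_minf (f : R -> R) (l : R) : Prop :=
  forall eps, 0 < eps -> exists M, forall x, x <= M -> Rabs (f x - l) < eps.

Definition integrable_near_pinf (g : R -> R) : Prop :=
  exists M L, forall eps, 0 < eps -> exists N, forall b, N <= b ->
    exists v, is_integral (fun x => Rabs (g x)) M b v /\ Rabs (v - L) < eps.
Definition integrable_near_minf (g : R -> R) : Prop :=
  exists M L, forall eps, 0 < eps -> exists N, forall a, a <= N ->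
    exists v, is_integral (fun x => Rabs (g x)) a M v /\ Rabs (v - L) < eps.

Definition improper_integral_R (f : R -> R) (I : R) : Prop :=
  forall eps, 0 < eps -> exists M, forall a b, a <= - M -> M <= b ->
    exists v, is_integral f a b v /\ Rabs (v - I) < eps.

(* the integrand (Delta^2 - k^2) restricted to the set {x : k^2(x) < Delta^2} *)
Definition below_part (k2 : R -> R) (D2 : R) (x : R) : R :=
  if Rlt_dec (k2 x) D2 then D2 - k2 x else 0.

From Stdlib Require Import Reals Lra Psatz Classical.
Open Scope R_scope.

(* Write u = u1 + i u2 for the scattering solution, S = Re(conj u u'), and for a wave number c > 0
   and a regularisation e > 0 consider the energy
     E_c,e(x) = |u'|^2/c + c|u|^2 + sqrt((|u'|^2/c - c|u|^2)^2 + 4 S^2 + e).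
   The proof compares E at the two ends of the real line:
   1. (ln E_c)' = 2 S (c^2 - k^2) / (c sqrt(...)) >= -|c^2 - k^2|/c  (energy_log_derivative),
      and changing the wave number from c to c' changes E by at most a factor max(c/c', c'/c).
   2. With the clipped local wave number phi = sqrt(max(k^2, D^2)), which is monotone on each side
      of the minimum x0, a subdivision (Gronwall-type) argument gives, for p <= x0 <= q,
        E(p) <= E(q) phi(p) phi(q) / D^2 exp(1/D int_p^q (D^2 - k^2)_+)     (energy_bound).
   3. The improper integral of (D^2 - k^2)_+ exists: the integrand is nonnegative and dominated by
      |k^2 - k_{+-oo}^2| near +-oo.
   4. Along lattice points where the plane waves equal 1, the asymptotics of u (and, by a
      Landau-type inequality, of u') give E -> 2 k_+ |tau|^2 at +oo and E -> 2 k_- (1 + |r|)^2 at -oo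
      as e -> 0; constancy of the Wronskian gives k_+ |tau|^2 = k_- (1 - |r|^2).
   5. Eliminating |r| between these two facts yields the sech^2 bound. *)

Lemma dlim_ext (f g : R -> R) x l l' :
  (forall y, f y = g y) -> l = l' -> derivable_pt_lim f x l -> derivable_pt_lim g x l'.
Proof.
  intros Hfg <- Hf eps Heps. destruct (Hf eps Heps) as [del Hdel].
  exists del. intros h Hh0 Hh. rewrite <- !Hfg. auto.
Qed.

Lemma dlim_local (f g : R -> R) x l d : 0 < d -> (forall y, Rabs (y - x) < d -> f y = g y) ->
  derivable_pt_lim f x l -> derivable_pt_lim g x l.
Proof.
  intros Hd Heq Hf eps Heps. destruct (Hf eps Heps) as [del Hdel].
  assert (Hm : 0 < Rmin del d) by (apply Rmin_pos; [apply cond_pos|lra]).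
  exists (mkposreal _ Hm). intros h hne hlt. simpl in hlt.
  rewrite <- (Heq (x + h)), <- (Heq x).
  - apply Hdel; auto. apply (Rlt_le_trans _ _ _ hlt), Rmin_l.
  - unfold Rminus; rewrite Rplus_opp_r, Rabs_R0; lra.
  - replace (x + h - x) with h by ring. apply (Rlt_le_trans _ _ _ hlt), Rmin_r.
Qed.

Lemma dlim_sqrt (f : R -> R) x a : 0 < f x -> derivable_pt_lim f x a ->
  derivable_pt_lim (fun y => sqrt (f y)) x (a / (2 * sqrt (f x))).
Proof.
  intros Hpos Hf. eapply dlim_ext; [intro; reflexivity| |].
  2: exact (derivable_pt_lim_comp f sqrt x a _ Hf (derivable_pt_lim_sqrt _ Hpos)).
  unfold Rdiv; ring.
Qed.

Lemma dlim_ln (f : R -> R) x a : 0 < f x -> derivable_pt_lim f x a ->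
  derivable_pt_lim (fun y => ln (f y)) x (a / f x).
Proof.
  intros Hpos Hf. eapply dlim_ext; [intro; reflexivity| |].
  2: exact (derivable_pt_lim_comp f ln x a _ Hf (derivable_pt_lim_ln _ Hpos)).
  unfold Rdiv; ring.
Qed.

Lemma dlim_scale c x : derivable_pt_lim (fun y => c * y) x c.
Proof.
  eapply dlim_ext; [intro; reflexivity| |].
  2: apply derivable_pt_lim_mult; [apply derivable_pt_lim_const|apply derivable_pt_lim_id].
  cbv; ring.
Qed.

Lemma dlim_cos_scaled c x : derivable_pt_lim (fun y => cos (c * y)) x (- (c * sin (c * x))).
Proof.
  eapply dlim_ext; [intro; reflexivity| |].
  2: exact (derivable_pt_lim_comp _ cos x _ _ (dlim_scale c x) (derivable_pt_lim_cos _)).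
  ring.
Qed.

Lemma dlim_sin_scaled c x : derivable_pt_lim (fun y => sin (c * y)) x (c * cos (c * x)).
Proof.
  eapply dlim_ext; [intro; reflexivity| |].
  2: exact (derivable_pt_lim_comp _ sin x _ _ (dlim_scale c x) (derivable_pt_lim_sin _)).
  ring.
Qed.

Lemma deriv_nonneg_mono (f f' : R -> R) a b : a <= b ->
  (forall t, a <= t <= b -> derivable_pt_lim f t (f' t)) ->
  (forall t, a <= t <= b -> 0 <= f' t) -> f a <= f b.
Proof.
  intros [Hab| <-] Hd Hp; [|lra].
  destruct (MVT_cor2 f f' a b Hab Hd) as [c [Hc Hcr]].
  assert (0 <= f' c * (b - a)) by (apply Rmult_le_pos; [apply Hp; lra|lra]). lra.
Qed.

Lemma one_le_ratio c d : 0 < d -> d <= c -> 1 <= c / d.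
Proof. intros Hd Hdc. apply (Rmult_le_reg_r d); [lra|]. unfold Rdiv. rewrite Rmult_assoc, Rinv_l; lra. Qed.

Lemma ln_le_mono x y : 0 < x -> x <= y -> ln x <= ln y.
Proof. intros Hx [H| ->]; [left; apply ln_increasing; auto|lra]. Qed.

Lemma ln_le_inv x y : 0 < x -> 0 < y -> ln x <= ln y -> x <= y.
Proof.
  intros Hx Hy [H|H]; [left; apply ln_lt_inv; auto|right; apply ln_inv; auto].
Qed.

Lemma ln_le_ratio A B c d : 0 < A -> 0 < B -> 0 < c -> 0 < d -> A <= (c / d) * B ->
  ln A <= ln c - ln d + ln B.
Proof.
  intros HA HB Hc Hd H.
  assert (Hd' : 0 < / d) by (apply Rinv_0_lt_compat; lra).
  apply ln_le_mono in H; auto. unfold Rdiv in H.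
  rewrite !ln_mult, ln_Rinv in H by (auto; apply Rmult_lt_0_compat; auto). lra.
Qed.

Lemma disc_nonneg a s e : 0 <= e -> 0 <= a * a + 4 * (s * s) + e.
Proof. intro He. pose proof (Rle_0_sqr a). pose proof (Rle_0_sqr s). unfold Rsqr in *. lra. Qed.

Definition energy_form (a b s e : R) : R := a + b + sqrt ((a - b) * (a - b) + 4 * (s * s) + e).

Lemma energy_form_sym a b s e : energy_form a b s e = energy_form b a s e.
Proof. unfold energy_form. replace ((b - a) * (b - a)) with ((a - b) * (a - b)) by ring. ring. Qed.

Lemma energy_form_rescale a b s e rho : 0 <= a -> 0 <= b -> 0 < e -> 1 <= rho ->
  energy_form (a / rho) (rho * b) s e <= rho * energy_form a b s e.
Proof.
  intros Ha Hb He Hr. unfold energy_form.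
  set (r := sqrt ((a - b) * (a - b) + 4 * (s * s) + e)).
  set (r' := sqrt ((a / rho - rho * b) * (a / rho - rho * b) + 4 * (s * s) + e)).
  assert (Hr2 : r * r = (a - b) * (a - b) + 4 * (s * s) + e) by (apply sqrt_sqrt, disc_nonneg; lra).
  assert (Hr'2 : r' * r' = (a / rho - rho * b) * (a / rho - rho * b) + 4 * (s * s) + e)
    by (apply sqrt_sqrt, disc_nonneg; lra).
  assert (Hr0 : 0 <= r) by apply sqrt_pos. assert (Hr'0 : 0 <= r') by apply sqrt_pos.
  assert (Hrab : 0 <= a - b + r).
  { destruct (Rle_dec (b - a) 0); [lra|]. assert (b - a <= r); [|lra].
    apply Rsqr_incr_0_var; [unfold Rsqr; nra|lra]. }
  set (m := a * (rho - / rho)).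
  assert (Hinv : / rho <= 1) by (rewrite <- Rinv_1; apply Rinv_le_contravar; lra).
  assert (Hm : 0 <= m) by (unfold m; apply Rmult_le_pos; lra).
  assert (HA : a / rho + rho * b = rho * (a + b) - m) by (unfold m; field; lra).
  rewrite HA. assert (r' <= m + rho * r); [|nra].
  apply Rsqr_incr_0_var; [|nra]. unfold Rsqr. rewrite Hr'2.
  assert (Hkey : (m + rho * r) * (m + rho * r)
                 - ((a / rho - rho * b) * (a / rho - rho * b) + 4 * (s * s) + e)
               = (rho * rho - 1) * ((a + b) + r) * (a - b + r)).
  { transitivity ((m + rho * r) * (m + rho * r) - (a / rho - rho * b) * (a / rho - rho * b)
                  - (r * r - (a - b) * (a - b))); [rewrite Hr2; ring|unfold m; field; lra]. }
  assert (0 <= (rho * rho - 1) * ((a + b) + r) * (a - b + r))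
    by (apply Rmult_le_pos; [apply Rmult_le_pos|]; nra).
  lra.
Qed.

Definition sqnorm (f g : R -> R) (x : R) : R := f x * f x + g x * g x.

Section Energy.

Variables u1 u2 du1 du2 : R -> R.

(* Re(conj u u') for u = u1 + i u2. *)
Definition re_dot (x : R) : R := u1 x * du1 x + u2 x * du2 x.

(* The regularised energy of u measured with wave number c.  For e = 0 and
   u = alpha e^{icx} + beta e^{-icx} it equals 2 c (|alpha| + |beta|)^2 for every x. *)
Definition energy (c e x : R) : R :=
  energy_form (sqnorm du1 du2 x / c) (c * sqnorm u1 u2 x) (re_dot x) e.

(* The radicand of the energy; it is positive thanks to the regularisation e > 0. *)
Definition energy_disc (c e x : R) : R :=
  (sqnorm du1 du2 x / c - c * sqnorm u1 u2 x) * (sqnorm du1 du2 x / c - c * sqnorm u1 u2 x)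
  + 4 * (re_dot x * re_dot x) + e.

Lemma sqnorm_nonneg f g x : 0 <= sqnorm f g x.
Proof. unfold sqnorm; nra. Qed.

Lemma energy_disc_pos c e x : 0 < e -> 0 < energy_disc c e x.
Proof.
  intro He. unfold energy_disc.
  pose proof (disc_nonneg (sqnorm du1 du2 x / c - c * sqnorm u1 u2 x) (re_dot x) 0). lra.
Qed.

Lemma energy_pos c e x : 0 < c -> 0 < e -> 0 < energy c e x.
Proof.
  intros Hc He. unfold energy, energy_form.
  pose proof (sqrt_lt_R0 _ (energy_disc_pos c e x He)).
  assert (0 <= sqnorm du1 du2 x / c)
    by (apply Rmult_le_pos; [apply sqnorm_nonneg|left; apply Rinv_0_lt_compat; lra]).
  assert (0 <= c * sqnorm u1 u2 x) by (apply Rmult_le_pos; [lra|apply sqnorm_nonneg]).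
  unfold energy_disc in *. lra.
Qed.

Lemma re_dot_le_disc c e x : 0 < e -> Rabs (2 * re_dot x) <= sqrt (energy_disc c e x).
Proof.
  intro He. rewrite <- sqrt_Rsqr_abs. apply sqrt_le_1_alt. unfold energy_disc, Rsqr.
  pose proof (disc_nonneg (sqnorm du1 du2 x / c - c * sqnorm u1 u2 x) 0 e). lra.
Qed.

Lemma energy_change_up c d e x : 0 < d -> d <= c -> 0 < e -> energy c e x <= (c / d) * energy d e x.
Proof.
  intros Hd Hdc He. unfold energy.
  replace (sqnorm du1 du2 x / c) with ((sqnorm du1 du2 x / d) / (c / d)) by (field; lra).
  replace (c * sqnorm u1 u2 x) with ((c / d) * (d * sqnorm u1 u2 x)) by (field; lra).
  apply energy_form_rescale; auto.
  - apply Rmult_le_pos; [apply sqnorm_nonneg|left; apply Rinv_0_lt_compat; lra].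
  - apply Rmult_le_pos; [lra|apply sqnorm_nonneg].
  - apply one_le_ratio; lra.
Qed.

Lemma energy_change_down c d e x : 0 < d -> d <= c -> 0 < e -> energy d e x <= (c / d) * energy c e x.
Proof.
  intros Hd Hdc He. unfold energy.
  rewrite (energy_form_sym (sqnorm du1 du2 x / d)), (energy_form_sym (sqnorm du1 du2 x / c)).
  replace (d * sqnorm u1 u2 x) with ((c * sqnorm u1 u2 x) / (c / d)) by (field; lra).
  replace (sqnorm du1 du2 x / d) with ((c / d) * (sqnorm du1 du2 x / c)) by (field; lra).
  apply energy_form_rescale; auto.
  - apply Rmult_le_pos; [lra|apply sqnorm_nonneg].
  - apply Rmult_le_pos; [apply sqnorm_nonneg|left; apply Rinv_0_lt_compat; lra].
  - apply one_le_ratio; lra.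
Qed.

End Energy.

(* If |s| <= q then s w / (c q) >= -|w|/c; this bounds (ln E)' from below. *)
Lemma ratio_lower_bound s w c q : 0 < c -> 0 < q -> Rabs s <= q -> - (Rabs w / c) <= s * w / (c * q).
Proof.
  intros Hc Hq Hs.
  assert (Hsw : - (q * Rabs w) <= s * w).
  { pose proof (Rle_abs (- (s * w))) as H. rewrite Rabs_Ropp, Rabs_mult in H.
    pose proof (Rabs_pos w). pose proof (Rabs_pos s). nra. }
  apply (Rmult_le_reg_r (c * q)); [nra|].
  replace (s * w / (c * q) * (c * q)) with (s * w) by (field; lra).
  replace (- (Rabs w / c) * (c * q)) with (- (q * Rabs w)) by (field; lra). exact Hsw.
Qed.

Lemma subdivision_bound (F m : R -> R) a b (n : nat) : a <= b -> (0 < n)%nat ->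
  (forall x y, a <= x <= y -> y <= b -> F x <= F y + (y - x) * (m y - m x)) ->
  F a <= F b + (b - a) / INR n * (m b - m a).
Proof.
  intros Hab Hn Hs. assert (HnR : 0 < INR n) by (apply lt_0_INR; exact Hn).
  set (h := (b - a) / INR n).
  assert (Hh : 0 <= h) by (apply Rmult_le_pos; [lra|left; apply Rinv_0_lt_compat; lra]).
  assert (Hb : a + INR n * h = b) by (unfold h; field; lra).
  assert (Hj : forall j, (j <= n)%nat -> F a <= F (a + INR j * h) + h * (m (a + INR j * h) - m a)).
  { induction j as [|j IH]; intro Hj.
    - simpl. replace (a + 0 * h) with a by ring. lra.
    - assert (Hjn : INR (S j) <= INR n) by (apply le_INR; exact Hj).
      rewrite S_INR in *. pose proof (IH ltac:(lia)) as IH'. pose proof (pos_INR j).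
      assert (H1 : a <= a + INR j * h <= a + (INR j + 1) * h) by nra.
      assert (H2 : a + (INR j + 1) * h <= b) by nra.
      pose proof (Hs _ _ H1 H2) as Hst.
      replace (a + (INR j + 1) * h - (a + INR j * h)) with h in Hst by ring. lra. }
  pose proof (Hj n (le_n n)) as Hfin. rewrite Hb in Hfin. exact Hfin.
Qed.

(* Letting the subdivision become arbitrarily fine gives F a <= F b. *)
Lemma telescoping_bound (F m : R -> R) a b : a <= b ->
  (forall x y, a <= x <= y -> y <= b -> m x <= m y) ->
  (forall x y, a <= x <= y -> y <= b -> F x <= F y + (y - x) * (m y - m x)) ->
  F a <= F b.
Proof.
  intros Hab Hm Hs.
  destruct (Rle_dec (F a) (F b)) as [|Hc]; [assumption|exfalso].
  assert (Hd : 0 < F a - F b) by lra.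
  assert (Hmm : 0 <= (b - a) * (m b - m a)) by (pose proof (Hm a b); nra).
  destruct (INR_unbounded ((b - a) * (m b - m a) / (F a - F b))) as [n Hn].
  assert (HnR : 0 < INR n).
  { assert (0 <= (b - a) * (m b - m a) / (F a - F b))
      by (apply Rmult_le_pos; [lra|left; apply Rinv_0_lt_compat; lra]). lra. }
  assert (Hn0 : (0 < n)%nat) by (apply INR_lt; simpl; lra).
  pose proof (subdivision_bound F m a b n Hab Hn0 Hs) as Hsub.
  assert (Hsmall : (b - a) / INR n * (m b - m a) < F a - F b); [|lra].
  replace ((b - a) / INR n * (m b - m a)) with ((b - a) * (m b - m a) / INR n) by (field; lra).
  apply (Rmult_lt_reg_r (INR n)); [lra|].
  replace ((b - a) * (m b - m a) / INR n * INR n) with ((b - a) * (m b - m a)) by (field; lra).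
  apply (Rmult_lt_reg_r (/ (F a - F b))); [apply Rinv_0_lt_compat; lra|].
  replace ((F a - F b) * INR n * / (F a - F b)) with (INR n) by (field; lra). exact Hn.
Qed.

Definition clipped_wavenumber (k2 : R -> R) (D x : R) : R := sqrt (Rmax (k2 x) (D * D)).

Lemma clipped_wavenumber_sq k2 D x :
  clipped_wavenumber k2 D x * clipped_wavenumber k2 D x = Rmax (k2 x) (D * D).
Proof.
  apply sqrt_sqrt. apply (Rle_trans _ (D * D)); [apply Rle_0_sqr|apply Rmax_r].
Qed.

Lemma clipped_wavenumber_ge k2 D x : 0 < D -> D <= clipped_wavenumber k2 D x.
Proof.
  intro HD. unfold clipped_wavenumber. rewrite <- (sqrt_square D) at 1 by lra.
  apply sqrt_le_1_alt, Rmax_r.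
Qed.

Lemma clipped_wavenumber_mono k2 D x y : k2 x <= k2 y ->
  clipped_wavenumber k2 D x <= clipped_wavenumber k2 D y.
Proof. intro H. unfold clipped_wavenumber. apply sqrt_le_1_alt. unfold Rmax. repeat destruct Rle_dec; lra. Qed.

Lemma wavenumber_gap_bound (k2 : R -> R) c d D t : 0 < D -> D <= d -> d <= c ->
  d * d <= Rmax (k2 t) (D * D) -> Rmax (k2 t) (D * D) <= c * c ->
  Rabs (c * c - k2 t) / c <= (c * c - d * d) / D + below_part k2 (D * D) t / D.
Proof.
  intros HD Hd Hc H1 H2. unfold below_part, Rmax in *. set (K := k2 t) in *.
  assert (HcD : / c <= / D) by (apply Rinv_le_contravar; lra).
  assert (Hc0 : 0 < / c) by (apply Rinv_0_lt_compat; lra).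
  destruct (Rlt_dec K (D * D)) as [Hl|Hl]; destruct (Rle_dec K (D * D)) as [Hl'|Hl']; try lra;
    rewrite Rabs_right by nra; unfold Rdiv.
  - apply (Rle_trans _ ((c * c - d * d + (D * D - K)) * / c)); [apply Rmult_le_compat_r; lra|].
    rewrite <- Rmult_plus_distr_r. apply Rmult_le_compat_l; nra.
  - rewrite Rmult_0_l, Rplus_0_r. apply Rmult_le_compat; nra.
  - rewrite Rmult_0_l, Rplus_0_r. apply Rmult_le_compat; nra.
Qed.

Section Solution.

Variable k2 : R -> R.
Variables u1 u2 du1 du2 : R -> R.
Hypothesis hu1 : forall x, derivable_pt_lim u1 x (du1 x).
Hypothesis hu2 : forall x, derivable_pt_lim u2 x (du2 x).
Hypothesis hdu1 : forall x, derivable_pt_lim du1 x (- (k2 x * u1 x)).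
Hypothesis hdu2 : forall x, derivable_pt_lim du2 x (- (k2 x * u2 x)).

Let S := re_dot u1 u2 du1 du2.

Lemma sqnorm_derivative x : derivable_pt_lim (sqnorm u1 u2) x (2 * S x).
Proof.
  eapply dlim_ext; [intro; reflexivity| |].
  2: apply derivable_pt_lim_plus; apply derivable_pt_lim_mult; auto.
  unfold S, re_dot; ring.
Qed.

Lemma sqnorm_deriv_derivative x : derivable_pt_lim (sqnorm du1 du2) x (-2 * k2 x * S x).
Proof.
  eapply dlim_ext; [intro; reflexivity| |].
  2: apply derivable_pt_lim_plus; apply derivable_pt_lim_mult; auto.
  unfold S, re_dot; ring.
Qed.

Lemma re_dot_derivative x :
  derivable_pt_lim S x (sqnorm du1 du2 x - k2 x * sqnorm u1 u2 x).
Proof.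
  eapply dlim_ext; [intro; reflexivity| |].
  2: apply derivable_pt_lim_plus; apply derivable_pt_lim_mult; auto.
  unfold sqnorm; ring.
Qed.

Lemma wronskian_const x : u1 x * du2 x - u2 x * du1 x = u1 0 * du2 0 - u2 0 * du1 0.
Proof.
  set (w := fun t => u1 t * du2 t - u2 t * du1 t).
  assert (Hd : forall t, derivable_pt_lim w t 0).
  { intro t. eapply dlim_ext; [intro; reflexivity| |].
    2: apply derivable_pt_lim_minus; apply derivable_pt_lim_mult; auto.
    ring. }
  destruct (MVT_abs w (fun _ => 0) 0 x (fun t _ => Hd t)) as [t [Ht _]].
  rewrite Rabs_R0, Rmult_0_l in Ht. change (w x = w 0).
  apply Rminus_diag_uniq. destruct (Req_dec (w x - w 0) 0) as [|Hne]; [assumption|].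
  pose proof (Rabs_pos_lt _ Hne). lra.
Qed.

Lemma amplitude_sum_derivative c x : 0 < c ->
  derivable_pt_lim (fun t => sqnorm du1 du2 t / c + c * sqnorm u1 u2 t) x
    (2 * S x * (c * c - k2 x) / c).
Proof.
  intro Hc. eapply dlim_ext; [intro; reflexivity| |].
  2: apply derivable_pt_lim_plus; apply derivable_pt_lim_mult;
     [apply sqnorm_deriv_derivative|apply derivable_pt_lim_const|
      apply derivable_pt_lim_const|apply sqnorm_derivative].
  cbv [fct_cte]; field; lra.
Qed.

Lemma amplitude_gap_derivative c x : 0 < c ->
  derivable_pt_lim (fun t => sqnorm du1 du2 t / c - c * sqnorm u1 u2 t) x
    (- 2 * S x * (c * c + k2 x) / c).
Proof.
  intro Hc. eapply dlim_ext; [intro; reflexivity| |].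
  2: apply derivable_pt_lim_minus; apply derivable_pt_lim_mult;
     [apply sqnorm_deriv_derivative|apply derivable_pt_lim_const|
      apply derivable_pt_lim_const|apply sqnorm_derivative].
  cbv [fct_cte]; field; lra.
Qed.

Lemma energy_disc_derivative c e x : 0 < c ->
  derivable_pt_lim (energy_disc u1 u2 du1 du2 c e) x
    (4 * S x * (sqnorm du1 du2 x / c + c * sqnorm u1 u2 x) * (c * c - k2 x) / c).
Proof.
  intro Hc. eapply dlim_ext; [intro; reflexivity| |].
  2: apply derivable_pt_lim_plus; [apply derivable_pt_lim_plus|apply derivable_pt_lim_const].
  2: apply derivable_pt_lim_mult; apply amplitude_gap_derivative; exact Hc.
  2: apply derivable_pt_lim_mult; [apply derivable_pt_lim_const|];
     apply derivable_pt_lim_mult; apply re_dot_derivative.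
  cbv [fct_cte S]. field. lra.
Qed.

Lemma energy_log_derivative c e x : 0 < c -> 0 < e ->
  derivable_pt_lim (fun t => ln (energy u1 u2 du1 du2 c e t)) x
    (2 * S x * (c * c - k2 x) / (c * sqrt (energy_disc u1 u2 du1 du2 c e x))).
Proof.
  intros Hc He.
  pose proof (energy_disc_pos u1 u2 du1 du2 c e x He) as HQ.
  pose proof (energy_pos u1 u2 du1 du2 c e x Hc He) as HE.
  assert (dE : derivable_pt_lim (energy u1 u2 du1 du2 c e) x
      (2 * S x * (c * c - k2 x) / c +
       4 * S x * (sqnorm du1 du2 x / c + c * sqnorm u1 u2 x) * (c * c - k2 x) / c
         / (2 * sqrt (energy_disc u1 u2 du1 du2 c e x))))
    by exact (derivable_pt_lim_plus _ _ x _ _ (amplitude_sum_derivative c x Hc)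
                (dlim_sqrt _ x _ HQ (energy_disc_derivative c e x Hc))).
  eapply dlim_ext; [intro; reflexivity| |exact (dlim_ln _ x _ HE dE)].
  pose proof (sqrt_lt_R0 _ HQ) as Hq.
  change (energy u1 u2 du1 du2 c e x) with
    (sqnorm du1 du2 x / c + c * sqnorm u1 u2 x + sqrt (energy_disc u1 u2 du1 du2 c e x)) in HE |- *.
  set (P := sqnorm du1 du2 x) in *. set (N := sqnorm u1 u2 x) in *.
  set (q := sqrt (energy_disc u1 u2 du1 du2 c e x)) in *.
  assert (Hden : P + c * N * c + q * c <> 0).
  { replace (P + c * N * c + q * c) with ((P / c + c * N + q) * c) by (field; lra). nra. }
  field. lra.
Qed.

Lemma energy_log_growth (G g : R -> R) c e D alpha x y :
  (forall t, derivable_pt_lim G t (g t)) -> 0 < c -> 0 < e -> 0 < D -> x <= y ->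
  (forall t, x <= t <= y -> Rabs (c * c - k2 t) / c <= alpha + g t / D) ->
  ln (energy u1 u2 du1 du2 c e x) <= ln (energy u1 u2 du1 du2 c e y) + alpha * (y - x) + (G y - G x) / D.
Proof.
  intros hG Hc He HD Hxy Hb.
  set (H := fun t => ln (energy u1 u2 du1 du2 c e t) + alpha * t + G t / D).
  set (H' := fun t => 2 * S t * (c * c - k2 t) / (c * sqrt (energy_disc u1 u2 du1 du2 c e t))
                      + alpha + g t / D).
  assert (HD' : forall t, derivable_pt_lim H t (H' t)).
  { intro t. apply derivable_pt_lim_plus; [apply derivable_pt_lim_plus|].
    - apply energy_log_derivative; auto.
    - apply dlim_scale.
    - eapply dlim_ext; [intro; reflexivity| |].
      2: apply derivable_pt_lim_mult; [apply hG|apply derivable_pt_lim_const].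
      cbv [fct_cte]; unfold Rdiv; ring. }
  assert (Hpos : forall t, x <= t <= y -> 0 <= H' t).
  { intros t Ht. pose proof (Hb t Ht).
    pose proof (ratio_lower_bound (2 * S t) (c * c - k2 t) c _ Hc
      (sqrt_lt_R0 _ (energy_disc_pos u1 u2 du1 du2 c e t He)) (re_dot_le_disc u1 u2 du1 du2 c e t He)).
    unfold H'. lra. }
  pose proof (deriv_nonneg_mono H H' x y Hxy (fun t _ => HD' t) Hpos) as Hmono.
  unfold H in Hmono. unfold Rdiv in *. lra.
Qed.

Lemma energy_step (G : R -> R) D c d e x y :
  (forall t, derivable_pt_lim G t (below_part k2 (D * D) t)) ->
  0 < D -> D <= d -> d <= c -> 0 < e -> x <= y ->
  (forall t, x <= t <= y -> d * d <= Rmax (k2 t) (D * D) <= c * c) ->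
  ln (energy u1 u2 du1 du2 c e x)
    <= ln (energy u1 u2 du1 du2 c e y) + (c * c - d * d) / D * (y - x) + (G y - G x) / D.
Proof.
  intros hG HD Hd Hdc He Hxy Hrange.
  apply (energy_log_growth G (below_part k2 (D * D))); auto; try lra.
  intros t Ht. destruct (Hrange t Ht). apply wavenumber_gap_bound; auto.
Qed.

Section Well.

Variables x0 D : R.
Variable G : R -> R.
Hypothesis hdec : forall x y, x <= y -> y <= x0 -> k2 y <= k2 x.
Hypothesis hinc : forall x y, x0 <= x -> x <= y -> k2 x <= k2 y.
Hypothesis hmin : k2 x0 <= D * D.
Hypothesis hD : 0 < D.
Hypothesis hG : forall t, derivable_pt_lim G t (below_part k2 (D * D) t).

Let phi := clipped_wavenumber k2 D.
Let E (x : R) (e : R) := energy u1 u2 du1 du2 (phi x) e x.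

Lemma phi_at_min : phi x0 = D.
Proof. unfold phi, clipped_wavenumber. rewrite Rmax_right by lra. apply sqrt_square; lra. Qed.

Lemma phi_range x y t : k2 x <= k2 t -> k2 t <= k2 y ->
  phi x * phi x <= Rmax (k2 t) (D * D) <= phi y * phi y.
Proof.
  intros H1 H2. unfold phi. rewrite !clipped_wavenumber_sq.
  split; unfold Rmax; repeat destruct Rle_dec; lra.
Qed.

Lemma energy_bound_right e q : 0 < e -> x0 <= q ->
  ln (E x0 e) + ln (phi x0) + G x0 / D <= ln (E q e) + ln (phi q) + G q / D.
Proof.
  intros He Hq.
  apply (telescoping_bound (fun x => ln (E x e) + ln (phi x) + G x / D) (fun x => phi x * phi x / D));
    auto.
  - intros x y [Hx Hxy] Hy. apply Rmult_le_compat_r; [left; apply Rinv_0_lt_compat; lra|].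
    destruct (phi_range x y y (hinc x y Hx Hxy) (Rle_refl _)). lra.
  - intros x y [Hx Hxy] Hy. cbv beta. unfold E.
    set (c := phi y). set (d := phi x).
    assert (Hd : D <= d) by (apply clipped_wavenumber_ge; lra).
    assert (Hdc : d <= c) by (apply clipped_wavenumber_mono, hinc; lra).
    pose proof (ln_le_ratio _ _ c d (energy_pos u1 u2 du1 du2 d e x ltac:(lra) He)
      (energy_pos u1 u2 du1 du2 c e x ltac:(lra) He) ltac:(lra) ltac:(lra)
      (energy_change_down u1 u2 du1 du2 c d e x ltac:(lra) Hdc He)) as Hchange.
    pose proof (energy_step G D c d e x y hG hD Hd Hdc He Hxy
      (fun t Ht => phi_range x y t (hinc x t Hx (proj1 Ht)) (hinc t y ltac:(lra) (proj2 Ht))))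
      as Hstep.
    replace ((y - x) * (c * c / D - d * d / D)) with ((c * c - d * d) / D * (y - x)) by (field; lra).
    unfold Rdiv in *. lra.
Qed.

Lemma energy_bound_left e p : 0 < e -> p <= x0 ->
  ln (E p e) - ln (phi p) + G p / D <= ln (E x0 e) - ln (phi x0) + G x0 / D.
Proof.
  intros He Hp.
  apply (telescoping_bound (fun x => ln (E x e) - ln (phi x) + G x / D) (fun x => - (phi x * phi x / D)));
    auto.
  - intros x y [Hx Hxy] Hy. apply Ropp_le_contravar.
    apply Rmult_le_compat_r; [left; apply Rinv_0_lt_compat; lra|].
    destruct (phi_range y x y (Rle_refl _) (hdec x y Hxy Hy)). lra.
  - intros x y [Hx Hxy] Hy. cbv beta. unfold E.
    set (c := phi x). set (d := phi y).
    assert (Hd : D <= d) by (apply clipped_wavenumber_ge; lra).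
    assert (Hdc : d <= c) by (apply clipped_wavenumber_mono, hdec; lra).
    pose proof (ln_le_ratio _ _ c d (energy_pos u1 u2 du1 du2 c e y ltac:(lra) He)
      (energy_pos u1 u2 du1 du2 d e y ltac:(lra) He) ltac:(lra) ltac:(lra)
      (energy_change_up u1 u2 du1 du2 c d e y ltac:(lra) Hdc He)) as Hchange.
    pose proof (energy_step G D c d e x y hG hD Hd Hdc He Hxy
      (fun t Ht => phi_range y x t (hdec t y (proj2 Ht) Hy) (hdec x t (proj1 Ht) ltac:(lra))))
      as Hstep.
    replace ((y - x) * (- (d * d / D) - - (c * c / D))) with ((c * c - d * d) / D * (y - x))
      by (field; lra).
    unfold Rdiv in *. lra.
Qed.

Lemma energy_bound e p q : 0 < e -> p <= x0 -> x0 <= q ->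
  E p e <= E q e * (phi p * phi q / (D * D) * exp ((G q - G p) / D)).
Proof.
  intros He Hp Hq.
  pose proof (energy_bound_left e p He Hp) as HL. pose proof (energy_bound_right e q He Hq) as HR.
  rewrite phi_at_min in HL, HR.
  assert (Hphi : forall x, 0 < phi x) by (intro x; unfold phi; pose proof (clipped_wavenumber_ge k2 D x hD); lra).
  assert (HEp : 0 < E p e) by (apply energy_pos; [apply Hphi|exact He]).
  assert (HEq : 0 < E q e) by (apply energy_pos; [apply Hphi|exact He]).
  assert (HD2 : 0 < / (D * D)) by (apply Rinv_0_lt_compat, Rmult_lt_0_compat; lra).
  apply ln_le_inv; auto.
  { repeat apply Rmult_lt_0_compat; auto. apply exp_pos. }
  unfold Rdiv at 1. rewrite !ln_mult, ln_Rinv, ln_mult, ln_exp;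
    repeat (apply Rmult_lt_0_compat || apply exp_pos); auto.
  unfold Rdiv in *. lra.
Qed.

End Well.

End Solution.

Definition riemann_integrable_continuous (g : R -> R) (Hc : continuity g) (a b : R) :
  Riemann_integrable g a b :=
  match Rle_dec a b with
  | left h => continuity_implies_RiemannInt h (fun x _ => Hc x)
  | right h => RiemannInt_P1 (continuity_implies_RiemannInt (Rlt_le _ _ (Rnot_le_lt _ _ h))
                                                           (fun x _ => Hc x))
  end.

Lemma continuous_primitive (g : R -> R) : continuity g ->
  exists G, (forall t, derivable_pt_lim G t (g t)) /\ (forall a b, is_integral g a b (G b - G a)).
Proof.
  intro Hc. set (I := riemann_integrable_continuous g Hc).
  exists (fun x => RiemannInt (I 0 x)).
  assert (Hchasles : forall a b, RiemannInt (I a b) = RiemannInt (I 0 b) - RiemannInt (I 0 a)).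
  { intros a b. pose proof (RiemannInt_P26 (I 0 a) (I a b) (I 0 b)). lra. }
  split; [|intros a b; exists (I a b); apply Hchasles].
  intro t.
  assert (h : t - 1 <= t + 1) by lra.
  assert (C0 : forall x, t - 1 <= x <= t + 1 -> continuity_pt g x) by (intros; apply Hc).
  assert (Ht : t - 1 <= t <= t + 1) by lra.
  pose proof (RiemannInt_P28 h C0 Ht) as Hloc.
  apply (dlim_local (fun y => primitive h (FTC_P1 h C0) y + RiemannInt (I 0 (t - 1))) _ _ _ 1 Rlt_0_1).
  - intros y Hy. apply Rabs_def2 in Hy. unfold primitive.
    destruct (Rle_dec (t - 1) y) as [r1|r1]; [|lra].
    destruct (Rle_dec y (t + 1)) as [r2|r2]; [|lra].
    rewrite (RiemannInt_P5 (FTC_P1 h C0 r1 r2) (I (t - 1) y)), Hchasles. ring.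
  - eapply dlim_ext; [intro; reflexivity| |].
    2: apply derivable_pt_lim_plus; [exact Hloc|apply derivable_pt_lim_const].
    cbv [fct_cte]; ring.
Qed.

Lemma is_integral_unique f a b v w : is_integral f a b v -> is_integral f a b w -> v = w.
Proof. intros [p1 H1] [p2 H2]. subst. apply RiemannInt_P5. Qed.

Lemma increment_le (F f H h : R -> R) a b : a <= b ->
  (forall t, derivable_pt_lim F t (f t)) -> (forall t, derivable_pt_lim H t (h t)) ->
  (forall t, a <= t <= b -> f t <= h t) -> F b - F a <= H b - H a.
Proof.
  intros Hab HF HH Hfh.
  pose proof (deriv_nonneg_mono (fun t => H t - F t) (fun t => h t - f t) a b Hab
    (fun t _ => derivable_pt_lim_minus _ _ t _ _ (HH t) (HF t))
    (fun t Ht => ltac:(pose proof (Hfh t Ht); lra))). lra.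
Qed.

Lemma continuity_abs_diff (f : R -> R) K : continuity f -> continuity (fun x => Rabs (f x - K)).
Proof.
  intros Hf x. apply (continuity_pt_comp (fun y => f y - K) Rabs x); [|apply Rcontinuity_abs].
  apply continuity_pt_minus; [apply Hf|apply continuity_pt_const; intros ? ?; reflexivity].
Qed.

Lemma below_part_nonneg k2 D2 x : 0 <= below_part k2 D2 x.
Proof. unfold below_part; destruct Rlt_dec; lra. Qed.

(* (D^2 - k^2)_+ = ((D^2 - k^2) + |D^2 - k^2|)/2 is continuous. *)
Lemma below_part_continuous k2 D2 : continuity k2 -> continuity (below_part k2 D2).
Proof.
  intros Hc x.
  apply (continuity_pt_locally_ext (fun y => (Rabs (k2 y - D2) - (k2 y - D2)) * / 2) _ 1 x Rlt_0_1).
  { intros y _. unfold below_part.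
    destruct (Rlt_dec (k2 y) D2); [rewrite Rabs_left|rewrite Rabs_right]; lra. }
  apply continuity_pt_mult; [|apply continuity_pt_const; intros ? ?; reflexivity].
  apply continuity_pt_minus; [apply continuity_abs_diff; exact Hc|].
  apply continuity_pt_minus; [apply Hc|apply continuity_pt_const; intros ? ?; reflexivity].
Qed.

Lemma below_part_le_abs k2 D2 K x : D2 <= K -> below_part k2 D2 x <= Rabs (k2 x - K).
Proof.
  intro HK. unfold below_part. destruct Rlt_dec.
  - rewrite Rabs_left1 by lra. lra.
  - apply Rabs_pos.
Qed.

(* Limits toward +oo (d = true) or -oo (d = false); tends true and tends false unfold to
   tends_pinf and tends_minf. *)
Definition beyond (d : bool) (M x : R) : Prop := if d then M <= x else x <= M.
Definition tends (d : bool) (f : R -> R) (l : R) : Prop :=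
  forall eps, 0 < eps -> exists M, forall x, beyond d M x -> Rabs (f x - l) < eps.

Lemma beyond_both d M1 M2 : exists M, forall x, beyond d M x -> beyond d M1 x /\ beyond d M2 x.
Proof.
  destruct d; simpl.
  - exists (Rmax M1 M2). intros x H. split; eapply Rle_trans; [apply Rmax_l|exact H|apply Rmax_r|exact H].
  - exists (Rmin M1 M2). intros x H. split; eapply Rle_trans; [exact H|apply Rmin_l|exact H|apply Rmin_r].
Qed.

Lemma tends_reflect (f : R -> R) l : tends true f l -> tends false (fun x => - f (- x)) (- l).
Proof.
  intros Hf eps Heps. destruct (Hf eps Heps) as [M HM]. exists (- M). intros x Hx. simpl in Hx.
  replace (- f (- x) - - l) with (- (f (- x) - l)) by ring. rewrite Rabs_Ropp. apply HM. simpl; lra.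
Qed.

Lemma monotone_limit_pinf (G : R -> R) M B :
  (forall x y, M <= x -> x <= y -> G x <= G y) -> (forall x, M <= x -> G x <= B) ->
  exists l, tends true G l.
Proof.
  intros Hm Hb. set (E := fun y => exists x, M <= x /\ y = G x).
  assert (bE : bound E) by (exists B; intros y [x [Hx ->]]; auto).
  assert (nE : exists y, E y) by (exists (G M), M; split; [lra|auto]).
  destruct (completeness E bE nE) as [l [Hub Hlub]].
  exists l. intros eps He.
  assert (Hnear : exists x, M <= x /\ l - eps < G x).
  { apply NNPP. intro Hn. assert (l <= l - eps); [|lra]. apply Hlub. intros y [x [Hx ->]].
    apply Rnot_lt_le. intro Hlt. apply Hn. exists x; auto. }
  destruct Hnear as [x1 [Hx1 Hx1']].
  exists x1. intros x Hx. simpl in Hx.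
  assert (G x1 <= G x) by (apply Hm; auto). assert (G x <= l) by (apply Hub; exists x; split; [lra|auto]).
  apply Rabs_def1; lra.
Qed.

Lemma monotone_limit_minf (G : R -> R) M B :
  (forall x y, x <= y -> y <= M -> G x <= G y) -> (forall x, x <= M -> B <= G x) ->
  exists l, tends false G l.
Proof.
  intros Hm Hb.
  destruct (monotone_limit_pinf (fun x => - G (- x)) (- M) (- B)) as [l Hl].
  - intros x y Hx Hxy. pose proof (Hm (- y) (- x) ltac:(lra) ltac:(lra)). lra.
  - intros x Hx. pose proof (Hb (- x) ltac:(lra)). lra.
  - exists (- l). apply tends_reflect in Hl. intros eps Heps. destruct (Hl eps Heps) as [M' HM'].
    exists M'. intros x Hx. specialize (HM' x Hx). rewrite !Ropp_involutive in HM'. exact HM'.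
Qed.

Section ImproperIntegral.

Variables (k2 f G : R -> R) (K : R).
Hypothesis hcont : continuity k2.
Hypothesis hG : forall t, derivable_pt_lim G t (f t).
Hypothesis hf_nonneg : forall t, 0 <= f t.
Hypothesis hdom : forall t, f t <= Rabs (k2 t - K).

Lemma primitive_mono x y : x <= y -> G x <= G y.
Proof. intro Hxy. apply (deriv_nonneg_mono G f); auto. Qed.

Lemma primitive_limit_pinf : integrable_near_pinf (fun x => k2 x - K) -> exists l, tends true G l.
Proof.
  intros [M0 [L HL]]. destruct (HL 1 Rlt_0_1) as [N HN].
  destruct (continuous_primitive _ (continuity_abs_diff k2 K hcont)) as [H [HH HHi]].
  assert (Hmono : forall x y, x <= y -> H x <= H y)
    by (intros x y Hxy; apply (deriv_nonneg_mono H (fun t => Rabs (k2 t - K))); auto;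
        intros; apply Rabs_pos).
  set (M := Rmax M0 N).
  apply (monotone_limit_pinf G M (G M + (L + 1))); [intros; apply primitive_mono; auto|].
  intros b Hb. destruct (HN b ltac:(unfold M in Hb; pose proof (Rmax_r M0 N); lra)) as [v [Hv Hvl]].
  rewrite (is_integral_unique _ _ _ _ _ Hv (HHi M0 b)) in Hvl. apply Rabs_def2 in Hvl.
  pose proof (increment_le G f H (fun t => Rabs (k2 t - K)) M b Hb hG HH (fun t _ => hdom t)).
  pose proof (Hmono M0 M (Rmax_l M0 N)). lra.
Qed.

Lemma primitive_limit_minf : integrable_near_minf (fun x => k2 x - K) -> exists l, tends false G l.
Proof.
  intros [M0 [L HL]]. destruct (HL 1 Rlt_0_1) as [N HN].
  destruct (continuous_primitive _ (continuity_abs_diff k2 K hcont)) as [H [HH HHi]].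
  assert (Hmono : forall x y, x <= y -> H x <= H y)
    by (intros x y Hxy; apply (deriv_nonneg_mono H (fun t => Rabs (k2 t - K))); auto;
        intros; apply Rabs_pos).
  set (M := Rmin M0 N).
  apply (monotone_limit_minf G M (G M - (L + 1))); [intros; apply primitive_mono; auto|].
  intros a Ha. destruct (HN a ltac:(unfold M in Ha; pose proof (Rmin_r M0 N); lra)) as [v [Hv Hvl]].
  rewrite (is_integral_unique _ _ _ _ _ Hv (HHi a M0)) in Hvl. apply Rabs_def2 in Hvl.
  pose proof (increment_le G f H (fun t => Rabs (k2 t - K)) a M Ha hG HH (fun t _ => hdom t)).
  pose proof (Hmono M M0 (Rmin_l M0 N)). lra.
Qed.

End ImproperIntegral.

Lemma improper_integral_of_limits (f G : R -> R) lp lm :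
  (forall a b, is_integral f a b (G b - G a)) -> tends true G lp -> tends false G lm ->
  improper_integral_R f (lp - lm).
Proof.
  intros HGi Hlp Hlm eps He.
  destruct (Hlp (eps / 2) ltac:(lra)) as [M1 HM1]. destruct (Hlm (eps / 2) ltac:(lra)) as [M2 HM2].
  exists (Rmax (Rabs M1) (Rabs M2)). intros a b Ha Hb.
  exists (G b - G a). split; [apply HGi|].
  pose proof (Rmax_l (Rabs M1) (Rabs M2)). pose proof (Rmax_r (Rabs M1) (Rabs M2)).
  pose proof (Rle_abs M1). pose proof (Rle_abs (- M2)) as HM2'. rewrite Rabs_Ropp in HM2'.
  specialize (HM1 b ltac:(simpl; lra)). specialize (HM2 a ltac:(simpl; lra)).
  apply Rabs_def2 in HM1. apply Rabs_def2 in HM2. apply Rabs_def1; lra.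
Qed.

Lemma below_part_improper k2 D2 Kp Km : continuity k2 -> D2 <= Kp -> D2 <= Km ->
  integrable_near_pinf (fun x => k2 x - Kp) -> integrable_near_minf (fun x => k2 x - Km) ->
  exists (G : R -> R) (lp lm : R), (forall t, derivable_pt_lim G t (below_part k2 D2 t)) /\
    tends true G lp /\ tends false G lm /\ improper_integral_R (below_part k2 D2) (lp - lm).
Proof.
  intros Hc Hp Hm Hintp Hintm.
  destruct (continuous_primitive _ (below_part_continuous k2 D2 Hc)) as [G [HG HGi]].
  destruct (primitive_limit_pinf k2 _ G Kp Hc HG (below_part_nonneg k2 _)
    (fun t => below_part_le_abs k2 _ _ t Hp) Hintp) as [lp Hlp].
  destruct (primitive_limit_minf k2 _ G Km Hc HG (below_part_nonneg k2 _)
    (fun t => below_part_le_abs k2 _ _ t Hm) Hintm) as [lm Hlm].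
  exists G, lp, lm. repeat split; auto. exact (improper_integral_of_limits _ G lp lm HGi Hlp Hlm).
Qed.

Lemma tends_ext d (f g : R -> R) l : (forall x, f x = g x) -> tends d f l -> tends d g l.
Proof. intros H T eps He. destruct (T eps He) as [M HM]. exists M. intros. rewrite <- H. auto. Qed.

Lemma tends_eventually_bounded d f l : tends d f l ->
  exists M, forall x, beyond d M x -> Rabs (f x) <= Rabs l + 1.
Proof.
  intro H. destruct (H 1 Rlt_0_1) as [M HM]. exists M. intros x Hx. specialize (HM x Hx).
  pose proof (Rabs_triang_inv (f x) l). lra.
Qed.

Lemma tends_bounded_mult d (f g : R -> R) B : tends d f 0 ->
  (exists M, forall x, beyond d M x -> Rabs (g x) <= B) -> tends d (fun x => g x * f x) 0.
Proof.
  intros Hf [M1 HM1] eps Heps.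
  assert (HB : 0 < Rabs B + 1) by (pose proof (Rabs_pos B); lra).
  destruct (Hf (eps / (Rabs B + 1)) ltac:(apply Rdiv_lt_0_compat; lra)) as [M2 HM2].
  destruct (beyond_both d M1 M2) as [M HM]. exists M. intros x Hx. destruct (HM x Hx) as [H1 H2].
  specialize (HM1 x H1). specialize (HM2 x H2). rewrite Rminus_0_r in *. rewrite Rabs_mult.
  pose proof (Rle_abs B). pose proof (Rabs_pos (f x)).
  apply (Rle_lt_trans _ ((Rabs B + 1) * Rabs (f x))); [apply Rmult_le_compat_r; lra|].
  apply (Rmult_lt_reg_r (/ (Rabs B + 1))); [apply Rinv_0_lt_compat; lra|].
  replace ((Rabs B + 1) * Rabs (f x) * / (Rabs B + 1)) with (Rabs (f x)) by (field; lra). exact HM2.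
Qed.

Lemma tends_plus_zero d (f g : R -> R) : tends d f 0 -> tends d g 0 -> tends d (fun x => f x + g x) 0.
Proof.
  intros Hf Hg eps Heps.
  destruct (Hf (eps / 2) ltac:(lra)) as [M1 HM1]. destruct (Hg (eps / 2) ltac:(lra)) as [M2 HM2].
  destruct (beyond_both d M1 M2) as [M HM]. exists M. intros x Hx. destruct (HM x Hx) as [H1 H2].
  specialize (HM1 x H1). specialize (HM2 x H2). rewrite Rminus_0_r in *.
  pose proof (Rabs_triang (f x) (g x)). lra.
Qed.

Lemma derivative_interpolation (e e' e'' : R -> R) a x eps :
  (forall t, derivable_pt_lim e t (e' t)) -> (forall t, derivable_pt_lim e' t (e'' t)) ->
  a <= x <= a + 1 -> (forall t, a <= t <= a + 1 -> Rabs (e t) < eps /\ Rabs (e'' t) < eps) ->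
  Rabs (e' x) < 3 * eps.
Proof.
  intros H1 H2 Hx Hsmall.
  destruct (MVT_abs e e' a (a + 1) (fun t _ => H1 t)) as [xi [Hxi Hxir]].
  rewrite Rmin_left, Rmax_right in Hxir by lra.
  replace (a + 1 - a) with 1 in Hxi by ring. rewrite Rabs_R1, Rmult_1_r in Hxi.
  destruct (MVT_abs e' e'' x xi (fun t _ => H2 t)) as [eta [Heta Hetar]].
  assert (Heta' : a <= eta <= a + 1).
  { pose proof (Rmin_l x xi). pose proof (Rmin_r x xi). pose proof (Rmax_l x xi).
    pose proof (Rmax_r x xi). unfold Rmin, Rmax in *. destruct Rle_dec; lra. }
  destruct (Hsmall a ltac:(lra)) as [Ea _]. destruct (Hsmall (a + 1) ltac:(lra)) as [Eb _].
  destruct (Hsmall eta Heta') as [_ Eeta].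
  assert (Hxi2 : Rabs (e' xi) < 2 * eps).
  { rewrite <- Hxi. pose proof (Rabs_triang (e (a + 1)) (- e a)). rewrite Rabs_Ropp in *. unfold Rminus. lra. }
  assert (Hdist : Rabs (xi - x) <= 1) by (apply Rabs_le; lra).
  assert (Hdiff : Rabs (e' xi - e' x) < eps).
  { rewrite Heta. pose proof (Rabs_pos (e'' eta)). pose proof (Rabs_pos (xi - x)). nra. }
  pose proof (Rabs_triang (e' xi) (- (e' xi - e' x))). rewrite Rabs_Ropp in *.
  replace (e' xi + - (e' xi - e' x)) with (e' x) in * by ring. lra.
Qed.

Lemma tends_derivative_zero d (e e' e'' : R -> R) :
  (forall t, derivable_pt_lim e t (e' t)) -> (forall t, derivable_pt_lim e' t (e'' t)) ->
  tends d e 0 -> tends d e'' 0 -> tends d e' 0.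
Proof.
  intros H1 H2 He He'' eps Heps.
  destruct (He (eps / 3) ltac:(lra)) as [M1 HM1]. destruct (He'' (eps / 3) ltac:(lra)) as [M2 HM2].
  destruct (beyond_both d M1 M2) as [M HM].
  assert (Hsmall : forall a, (forall t, a <= t <= a + 1 -> beyond d M t) ->
                   forall t, a <= t <= a + 1 -> Rabs (e t) < eps / 3 /\ Rabs (e'' t) < eps / 3).
  { intros a Ha t Ht. destruct (HM t (Ha t Ht)) as [Ht1 Ht2].
    specialize (HM1 t Ht1). specialize (HM2 t Ht2). rewrite Rminus_0_r in *. auto. }
  exists M. intros x Hx. rewrite Rminus_0_r. replace eps with (3 * (eps / 3)) by field.
  destruct d; simpl in Hx.
  - apply (derivative_interpolation e e' e'' x x); auto; [lra|].
    apply Hsmall. intros t Ht. simpl. lra.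
  - apply (derivative_interpolation e e' e'' (x - 1) x); auto; [lra|].
    apply Hsmall. intros t Ht. simpl. lra.
Qed.

Lemma derivative_asymptotics d (k2 u du : R -> R) k A B :
  (forall x, derivable_pt_lim u x (du x)) -> (forall x, derivable_pt_lim du x (- (k2 x * u x))) ->
  tends d k2 (k ^ 2) ->
  tends d (fun x => u x - (A * cos (k * x) + B * sin (k * x))) 0 ->
  tends d (fun x => du x - (- (A * k) * sin (k * x) + B * k * cos (k * x))) 0.
Proof.
  intros Hu Hdu Hk Herr.
  set (w := fun x => A * cos (k * x) + B * sin (k * x)).
  apply (tends_derivative_zero d (fun x => u x - w x) _
    (fun x => - k2 x * (u x - w x) + w x * (k ^ 2 - k2 x))).
  - intro x. eapply dlim_ext; [intro; reflexivity| |].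
    2: apply derivable_pt_lim_minus; [apply Hu|apply derivable_pt_lim_plus];
       apply derivable_pt_lim_mult; try apply derivable_pt_lim_const;
       [apply dlim_cos_scaled|apply dlim_sin_scaled].
    cbv [fct_cte]; ring.
  - intro x. eapply dlim_ext; [intro; reflexivity| |].
    2: apply derivable_pt_lim_minus; [apply Hdu|apply derivable_pt_lim_plus];
       apply derivable_pt_lim_mult; try apply derivable_pt_lim_const;
       [apply dlim_sin_scaled|apply dlim_cos_scaled].
    unfold w; cbv [fct_cte]; ring.
  - exact Herr.
  - apply tends_plus_zero.
    + apply (tends_bounded_mult d _ _ (Rabs (k ^ 2) + 1)); [exact Herr|].
      destruct (tends_eventually_bounded d k2 _ Hk) as [M HM]. exists M. intros x Hx.
      rewrite Rabs_Ropp. auto.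
    + apply (tends_bounded_mult d _ _ (Rabs A + Rabs B)).
      * intros eps Heps. destruct (Hk eps Heps) as [M HM]. exists M. intros x Hx.
        rewrite Rminus_0_r, Rabs_minus_sym. auto.
      * exists 0. intros x _. unfold w. eapply Rle_trans; [apply Rabs_triang|]. rewrite !Rabs_mult.
        pose proof (Rmult_le_compat_l _ _ _ (Rabs_pos A) (Rabs_le _ _ (COS_bound (k * x)))).
        pose proof (Rmult_le_compat_l _ _ _ (Rabs_pos B) (Rabs_le _ _ (SIN_bound (k * x)))).
        change (IPR 1) with 1 in *. lra.
Qed.

Definition lattice (d : bool) (c x0 : R) (s : nat -> R) : Prop :=
  (forall n, cos (c * s n) = 1 /\ sin (c * s n) = 0) /\ (forall n, beyond d x0 (s n)) /\
  (forall M, exists N, forall n, (N <= n)%nat -> beyond d M (s n)).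

Lemma lattice_exists_pinf c x0 : 0 < c -> exists s, lattice true c x0 s.
Proof.
  intro Hc. destruct (INR_unbounded (Rabs x0 * c)) as [N0 HN0]. pose proof PI2_1.
  exists (fun n => 2 * INR (n + N0) * PI / c).
  assert (Hfar : forall m n, (m <= n + N0)%nat -> INR m / c <= 2 * INR (n + N0) * PI / c).
  { intros m n Hm. apply le_INR in Hm. pose proof (pos_INR m).
    apply Rmult_le_compat_r; [left; apply Rinv_0_lt_compat; lra|nra]. }
  assert (Hbeyond : forall M m, Rabs M * c < INR m -> M <= INR m / c).
  { intros M m Hm. pose proof (Rle_abs M).
    apply (Rmult_le_reg_r c); auto. unfold Rdiv. rewrite Rmult_assoc, Rinv_l; nra. }
  split; [|split].
  - intro n. replace (c * (2 * INR (n + N0) * PI / c)) with (0 + 2 * INR (n + N0) * PI) by (field; lra).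
    rewrite cos_period, sin_period, cos_0, sin_0. auto.
  - intro n. simpl. apply (Rle_trans _ _ _ (Hbeyond x0 N0 HN0)), Hfar. lia.
  - intro M. destruct (INR_unbounded (Rabs M * c)) as [N HN]. exists N. intros n Hn. simpl.
    apply (Rle_trans _ _ _ (Hbeyond M N HN)), Hfar. lia.
Qed.

(* The -oo lattice is the reflection of a +oo lattice. *)
Lemma lattice_exists d c x0 : 0 < c -> exists s, lattice d c x0 s.
Proof.
  intro Hc. destruct d; [exact (lattice_exists_pinf c x0 Hc)|].
  destruct (lattice_exists_pinf c (- x0) Hc) as [s [Hcs [Hx0 Hfar]]].
  exists (fun n => - s n). split; [|split].
  - intro n. replace (c * - s n) with (- (c * s n)) by ring.
    rewrite cos_neg, sin_neg. destruct (Hcs n) as [-> ->]. split; ring.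
  - intro n. specialize (Hx0 n). simpl in *. lra.
  - intro M. destruct (Hfar (- M)) as [N HN]. exists N. intros n Hn. specialize (HN n Hn). simpl in *. lra.
Qed.

Lemma tends_along_lattice d c x0 s (f : R -> R) l : lattice d c x0 s -> tends d f l ->
  Un_cv (fun n => f (s n)) l.
Proof.
  intros [_ [_ Hs]] T eps He. destruct (T eps He) as [M HM]. destruct (Hs M) as [N HN].
  exists N. intros n Hn. apply HM, HN. lia.
Qed.

Lemma cv_offset (a b : nat -> R) l : Un_cv (fun n => a n - b n) 0 -> (forall n, b n = l) -> Un_cv a l.
Proof.
  intros H Hb eps He. destruct (H eps He) as [N HN]. exists N. intros n Hn.
  specialize (HN n Hn). unfold Rdist in *. rewrite Hb, Rminus_0_r in HN. exact HN.
Qed.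

Lemma lattice_values d (k2 u du : R -> R) k A B x0 s :
  (forall x, derivable_pt_lim u x (du x)) -> (forall x, derivable_pt_lim du x (- (k2 x * u x))) ->
  tends d k2 (k ^ 2) -> lattice d k x0 s ->
  tends d (fun x => u x - (A * cos (k * x) + B * sin (k * x))) 0 ->
  Un_cv (fun n => u (s n)) A /\ Un_cv (fun n => du (s n)) (B * k).
Proof.
  intros Hu Hdu Hk Hs Herr.
  pose proof (derivative_asymptotics d k2 u du k A B Hu Hdu Hk Herr) as Hderr.
  pose proof (proj1 Hs) as Hcs.
  split; eapply cv_offset.
  - exact (tends_along_lattice d k x0 s _ _ Hs Herr).
  - intro n. cbv beta. destruct (Hcs n) as [-> ->]. ring.
  - exact (tends_along_lattice d k x0 s _ _ Hs Hderr).
  - intro n. cbv beta. destruct (Hcs n) as [-> ->]. ring.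
Qed.

Lemma cv_const c : Un_cv (fun _ => c) c.
Proof. intros eps He. exists 0%nat. intros. unfold Rdist. rewrite Rminus_diag, Rabs_R0. lra. Qed.

Lemma cv_inv (u : nat -> R) l : Un_cv u l -> l <> 0 -> Un_cv (fun n => / u n) (/ l).
Proof.
  intros H Hl. apply (continuity_seq Rinv u l); [|exact H].
  apply (continuity_pt_inv id l); [apply derivable_continuous_pt, derivable_pt_id|exact Hl].
Qed.

Lemma cv_exp (u : nat -> R) l : Un_cv u l -> Un_cv (fun n => exp (u n)) (exp l).
Proof.
  intro H. apply (continuity_seq exp u l); [|exact H].
  apply derivable_continuous_pt, derivable_pt_exp.
Qed.

Lemma energy_form_limit (a b s e : nat -> R) la lb ls :
  Un_cv a la -> Un_cv b lb -> Un_cv s ls -> Un_cv e 0 ->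
  Un_cv (fun n => energy_form (a n) (b n) (s n) (e n)) (energy_form la lb ls 0).
Proof.
  intros Ha Hb Hs He. unfold energy_form. apply CV_plus; [apply CV_plus; auto|].
  apply (continuity_seq sqrt); [apply continuity_pt_sqrt, disc_nonneg; lra|].
  apply CV_plus; [apply CV_plus|exact He].
  - apply CV_mult; apply CV_minus; auto.
  - apply CV_mult; [apply cv_const|apply CV_mult; auto].
Qed.

(* Far out, max(k^2, D^2) = k^2 once D^2 <= k_{+-oo}^2. *)
Lemma clipped_wavenumber_limit d k2 D k x0 s : 0 < k -> D * D <= k ^ 2 ->
  tends d k2 (k ^ 2) -> lattice d k x0 s -> Un_cv (fun n => clipped_wavenumber k2 D (s n)) k.
Proof.
  intros Hk HDk Hk2 Hs.
  assert (Hmax : Un_cv (fun n => Rmax (k2 (s n)) (D * D)) (k ^ 2)).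
  { intros eps He. destruct (tends_along_lattice d k x0 s k2 _ Hs Hk2 eps He) as [N HN].
    exists N. intros n Hn. specialize (HN n Hn). unfold Rdist in *. apply Rabs_def2 in HN.
    apply Rabs_def1; unfold Rmax; destruct Rle_dec; lra. }
  pose proof (continuity_seq sqrt _ _ (continuity_pt_sqrt _ (pow2_ge_0 k)) Hmax) as H.
  rewrite <- Rsqr_pow2, sqrt_Rsqr in H by lra. exact H.
Qed.

(* The incident side: e^{ikx} + r e^{-ikx} = (1 + r) cos kx + i (1 - r) sin kx. *)
Lemma incident_wave_form (u1 u2 : R -> R) k rr ri :
  tends_minf (fun x => u1 x - (cos (k * x) + rr * cos (k * x) + ri * sin (k * x))) 0 ->
  tends_minf (fun x => u2 x - (sin (k * x) + ri * cos (k * x) - rr * sin (k * x))) 0 ->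
  tends false (fun x => u1 x - ((1 + rr) * cos (k * x) + ri * sin (k * x))) 0 /\
  tends false (fun x => u2 x - (ri * cos (k * x) + (1 - rr) * sin (k * x))) 0.
Proof.
  intros H1 H2. split; [eapply tends_ext; [|exact H1]|eapply tends_ext; [|exact H2]]; intro; cbv beta; ring.
Qed.

(* The transmitted side: tau e^{ikx} = tau cos kx + i tau sin kx. *)
Lemma transmitted_wave_form (u1 u2 : R -> R) k tr ti :
  tends_pinf (fun x => u1 x - (tr * cos (k * x) - ti * sin (k * x))) 0 ->
  tends_pinf (fun x => u2 x - (tr * sin (k * x) + ti * cos (k * x))) 0 ->
  tends true (fun x => u1 x - (tr * cos (k * x) + - ti * sin (k * x))) 0 /\
  tends true (fun x => u2 x - (ti * cos (k * x) + tr * sin (k * x))) 0.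
Proof.
  intros H1 H2. split; [eapply tends_ext; [|exact H1]|eapply tends_ext; [|exact H2]]; intro; cbv beta; ring.
Qed.

Section Asymptotics.

Variables k2 u1 u2 du1 du2 : R -> R.
Hypothesis hu1 : forall x, derivable_pt_lim u1 x (du1 x).
Hypothesis hu2 : forall x, derivable_pt_lim u2 x (du2 x).
Hypothesis hdu1 : forall x, derivable_pt_lim du1 x (- (k2 x * u1 x)).
Hypothesis hdu2 : forall x, derivable_pt_lim du2 x (- (k2 x * u2 x)).

Lemma scattering_side d D k A1 B1 A2 B2 x0 (s e : nat -> R) :
  0 < k -> D * D <= k ^ 2 -> tends d k2 (k ^ 2) -> lattice d k x0 s -> Un_cv e 0 ->
  tends d (fun x => u1 x - (A1 * cos (k * x) + B1 * sin (k * x))) 0 ->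
  tends d (fun x => u2 x - (A2 * cos (k * x) + B2 * sin (k * x))) 0 ->
  Un_cv (fun n => clipped_wavenumber k2 D (s n)) k /\
  Un_cv (fun n => energy u1 u2 du1 du2 (clipped_wavenumber k2 D (s n)) (e n) (s n))
        (energy_form (k * (B1 * B1 + B2 * B2)) (k * (A1 * A1 + A2 * A2)) (k * (A1 * B1 + A2 * B2)) 0) /\
  u1 0 * du2 0 - u2 0 * du1 0 = k * (A1 * B2 - A2 * B1).
Proof.
  intros Hk HDk Hk2 Hs He H1 H2.
  destruct (lattice_values d k2 u1 du1 k A1 B1 x0 s hu1 hdu1 Hk2 Hs H1) as [Lu1 Ldu1].
  destruct (lattice_values d k2 u2 du2 k A2 B2 x0 s hu2 hdu2 Hk2 Hs H2) as [Lu2 Ldu2].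
  pose proof (clipped_wavenumber_limit d k2 D k x0 s Hk HDk Hk2 Hs) as Lphi.
  split; [exact Lphi|split].
  - replace (k * (B1 * B1 + B2 * B2)) with ((B1 * k * (B1 * k) + B2 * k * (B2 * k)) * / k)
      by (field; lra).
    replace (k * (A1 * B1 + A2 * B2)) with (A1 * (B1 * k) + A2 * (B2 * k)) by ring.
    unfold energy, sqnorm, re_dot, Rdiv. apply energy_form_limit; auto.
    + apply CV_mult; [apply CV_plus; apply CV_mult; auto|apply cv_inv; [auto|lra]].
    + apply CV_mult; [auto|apply CV_plus; apply CV_mult; auto].
    + apply CV_plus; apply CV_mult; auto.
  - apply (UL_sequence (fun n => u1 (s n) * du2 (s n) - u2 (s n) * du1 (s n))).
    + intros eps Heps. exists 0%nat. intros n _. unfold Rdist.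
      rewrite (wronskian_const k2 u1 u2 du1 du2 hu1 hu2 hdu1 hdu2 (s n)), Rminus_diag, Rabs_R0. lra.
    + replace (k * (A1 * B2 - A2 * B1)) with (A1 * (B2 * k) - A2 * (B1 * k)) by ring.
      apply CV_minus; apply CV_mult; auto.
Qed.

End Asymptotics.

Lemma energy_transmitted k tr ti :
  energy_form (k * (- ti * - ti + tr * tr)) (k * (tr * tr + ti * ti)) (k * (tr * - ti + ti * tr)) 0
  = 2 * (k * (tr ^ 2 + ti ^ 2)).
Proof.
  unfold energy_form.
  replace ((k * (- ti * - ti + tr * tr) - k * (tr * tr + ti * ti)) *
           (k * (- ti * - ti + tr * tr) - k * (tr * tr + ti * ti)) +
           4 * (k * (tr * - ti + ti * tr) * (k * (tr * - ti + ti * tr))) + 0) with 0 by ring.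
  rewrite sqrt_0. ring.
Qed.

Lemma energy_incident k rr ri : 0 < k ->
  energy_form (k * (ri * ri + (1 - rr) * (1 - rr))) (k * ((1 + rr) * (1 + rr) + ri * ri))
              (k * ((1 + rr) * ri + ri * (1 - rr))) 0
  = 2 * k * ((1 + sqrt (rr * rr + ri * ri)) * (1 + sqrt (rr * rr + ri * ri))).
Proof.
  intro Hk. unfold energy_form.
  replace ((k * (ri * ri + (1 - rr) * (1 - rr)) - k * ((1 + rr) * (1 + rr) + ri * ri)) *
           (k * (ri * ri + (1 - rr) * (1 - rr)) - k * ((1 + rr) * (1 + rr) + ri * ri)) +
           4 * (k * ((1 + rr) * ri + ri * (1 - rr)) * (k * ((1 + rr) * ri + ri * (1 - rr)))) + 0)
    with ((4 * k) * (4 * k) * (rr * rr + ri * ri)) by ring.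
  assert (Hrho : 0 <= rr * rr + ri * ri) by nra.
  rewrite sqrt_mult_alt, sqrt_square by nra.
  pose proof (sqrt_sqrt _ Hrho). nra.
Qed.

Lemma sech_sq_exp A : sech A ^ 2 = 4 * (exp A * exp A) / ((exp A * exp A + 1) * (exp A * exp A + 1)).
Proof.
  pose proof (exp_pos A). unfold sech, cosh. rewrite exp_Ropp. field. split; [nra|lra].
Qed.

Lemma reflection_bound rho K : 0 <= rho -> 0 < K -> 1 + rho <= (1 - rho) * K ->
  4 * K / ((K + 1) * (K + 1)) <= 1 - rho * rho.
Proof.
  intros Hr HK H.
  assert (HK1 : 1 <= K) by nra.
  assert (Hrho : rho * (K + 1) <= K - 1) by nra.
  apply (Rmult_le_reg_r ((K + 1) * (K + 1))); [nra|].
  unfold Rdiv. rewrite Rmult_assoc, Rinv_l, Rmult_1_r by nra.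
  assert (rho * (K + 1) * (rho * (K + 1)) <= (K - 1) * (K - 1)) by (apply Rmult_le_compat; nra).
  nra.
Qed.

Lemma transmission_bound km kp D I t2 rho :
  0 < km -> 0 < kp -> 0 < D -> 0 <= rho ->
  kp * t2 = km * (1 - rho * rho) ->
  2 * km * ((1 + rho) * (1 + rho)) <= 2 * (kp * t2) * (km * kp / (D * D) * exp (I / D)) ->
  (kp / km) * t2 >= (sech (/ 2 * ln (kp * km / (D * D)) + / (2 * D) * I)) ^ 2.
Proof.
  intros Hkm Hkp HD Hr HW Hin.
  set (A := / 2 * ln (kp * km / (D * D)) + / (2 * D) * I).
  set (K := km * kp / (D * D) * exp (I / D)).
  assert (HK0 : 0 < K).
  { apply Rmult_lt_0_compat; [apply Rdiv_lt_0_compat; nra|apply exp_pos]. }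
  assert (HKA : exp A * exp A = K).
  { rewrite <- exp_plus. unfold A, K.
    replace (/ 2 * ln (kp * km / (D * D)) + / (2 * D) * I + (/ 2 * ln (kp * km / (D * D)) + / (2 * D) * I))
      with (ln (kp * km / (D * D)) + I / D) by (field; lra).
    rewrite exp_plus, exp_ln by (apply Rdiv_lt_0_compat; nra).
    f_equal. field. lra. }
  rewrite sech_sq_exp, HKA.
  replace (kp / km * t2) with (kp * t2 / km) by (field; lra). rewrite HW.
  replace (km * (1 - rho * rho) / km) with (1 - rho * rho) by (field; lra).
  apply Rle_ge, reflection_bound; auto.
  fold K in Hin. rewrite HW in Hin.
  assert (Hpos : 0 < 2 * km * (1 + rho)) by nra.
  apply (Rmult_le_reg_l (2 * km * (1 + rho))); [exact Hpos|nra].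
Qed.

Lemma energy_ratio_limit (Eq phip phiq Gq Gp : nat -> R) lE km kp D lp lm :
  Un_cv Eq lE -> Un_cv phip km -> Un_cv phiq kp -> Un_cv Gq lp -> Un_cv Gp lm ->
  Un_cv (fun n => Eq n * (phip n * phiq n / (D * D) * exp ((Gq n - Gp n) / D)))
        (lE * (km * kp / (D * D) * exp ((lp - lm) / D))).
Proof.
  intros HE Hp Hq HGq HGp. unfold Rdiv.
  apply CV_mult; [exact HE|apply CV_mult; [apply CV_mult; [apply CV_mult; auto|apply cv_const]|]].
  apply cv_exp, CV_mult; [apply CV_minus; auto|apply cv_const].
Qed.

Theorem mainTheorem8
  (k2 : R -> R) (kp km x0 Delta : R)
  (u1 u2 du1 du2 : R -> R) (rr ri tr ti : R)
  (hkp : 0 < kp) (hkm : 0 < km)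
  (hcont : continuity k2)
  (hlimp : tends_pinf k2 (kp ^ 2)) (hlimm : tends_minf k2 (km ^ 2))
  (hintp : integrable_near_pinf (fun x => k2 x - kp ^ 2))
  (hintm : integrable_near_minf (fun x => k2 x - km ^ 2))
  (hdec : forall x y, x <= y -> y <= x0 -> k2 y <= k2 x)
  (hinc : forall x y, x0 <= x -> x <= y -> k2 x <= k2 y)
  (hD : 0 < Delta)
  (hD1 : k2 x0 <= Delta ^ 2)
  (hD2 : Delta ^ 2 <= Rmin (kp ^ 2) (km ^ 2))
  (hu1 : forall x, derivable_pt_lim u1 x (du1 x))
  (hu2 : forall x, derivable_pt_lim u2 x (du2 x))
  (hdu1 : forall x, derivable_pt_lim du1 x (- (k2 x * u1 x)))
  (hdu2 : forall x, derivable_pt_lim du2 x (- (k2 x * u2 x)))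
  (hasm1 : tends_minf (fun x => u1 x - (cos (km * x) + rr * cos (km * x) + ri * sin (km * x))) 0)
  (hasm2 : tends_minf (fun x => u2 x - (sin (km * x) + ri * cos (km * x) - rr * sin (km * x))) 0)
  (hasp1 : tends_pinf (fun x => u1 x - (tr * cos (kp * x) - ti * sin (kp * x))) 0)
  (hasp2 : tends_pinf (fun x => u2 x - (tr * sin (kp * x) + ti * cos (kp * x))) 0) :
  exists I : R,
    improper_integral_R (below_part k2 (Delta ^ 2)) I /\
    (kp / km) * (tr ^ 2 + ti ^ 2) >=
      (sech (/ 2 * ln (kp * km / Delta ^ 2) + / (2 * Delta) * I)) ^ 2.
Proof.
  replace (Delta ^ 2) with (Delta * Delta) in * by ring.
  pose proof (Rle_trans _ _ _ hD2 (Rmin_l _ _)) as hDp.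
  pose proof (Rle_trans _ _ _ hD2 (Rmin_r _ _)) as hDm.
  destruct (below_part_improper k2 _ _ _ hcont hDp hDm hintp hintm) as [G [lp [lm [HG [Hlp [Hlm HI]]]]]].
  exists (lp - lm). split; [exact HI|].
  (* compare the energies at lattice points p_n -> -oo and q_n -> +oo, regularised by 1/(n+1) *)
  destruct (lattice_exists false km x0 hkm) as [p Hp].
  destruct (lattice_exists true kp x0 hkp) as [q Hq].
  set (e := fun n => pos (RinvN n)).
  destruct (incident_wave_form u1 u2 km rr ri hasm1 hasm2) as [Hp1 Hp2].
  destruct (transmitted_wave_form u1 u2 kp tr ti hasp1 hasp2) as [Hq1 Hq2].
  destruct (scattering_side k2 u1 u2 du1 du2 hu1 hu2 hdu1 hdu2 false Delta km (1 + rr) ri ri (1 - rr) x0 p e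
    hkm hDm hlimm Hp RinvN_cv Hp1 Hp2) as [Lphp [LEp Wp]].
  destruct (scattering_side k2 u1 u2 du1 du2 hu1 hu2 hdu1 hdu2 true Delta kp tr (- ti) ti tr x0 q e
    hkp hDp hlimp Hq RinvN_cv Hq1 Hq2) as [Lphq [LEq Wq]].
  pose proof (fun n => energy_bound k2 u1 u2 du1 du2 hu1 hu2 hdu1 hdu2 x0 Delta G hdec hinc hD1 hD HG
    (e n) (p n) (q n) (cond_pos (RinvN n)) (proj1 (proj2 Hp) n) (proj1 (proj2 Hq) n)) as Hineq.
  pose proof (Rle_cv_lim Hineq LEp (energy_ratio_limit _ _ _ _ _ _ _ _ Delta _ _ LEq Lphp Lphq
    (tends_along_lattice _ _ _ _ _ _ Hq Hlp) (tends_along_lattice _ _ _ _ _ _ Hp Hlm))) as Hlim.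
  rewrite energy_transmitted, energy_incident in Hlim by assumption.
  (* flux conservation (Wronskian) and elimination of |r| *)
  apply (transmission_bound km kp Delta (lp - lm) _ (sqrt (rr * rr + ri * ri)) hkm hkp hD (sqrt_pos _)).
  - rewrite sqrt_sqrt by nra. nra.  (* kp |tau|^2 = Wronskian = km (1 - |r|^2) *)
  - exact Hlim.
Qed.
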